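(* Let $n\ge2$, $\beta\in\mathbb{R}$, and let $\omega_1,\dots,\omega_{n-1}$ be real numbers such that all sums $\sum_{i=m}^p\omega_i$ ($1\le m\le p\le n-1$) are nonzero. Then $$\int_0^\beta d\beta_1\int_0^{\beta_1}d\beta_2\cdots\int_0^{\beta_{n-1}}d\beta_n\,\exp\Big(-\sum_{j=1}^{n-1}\beta_j\omega_j+\beta_n\sum_{j=1}^{n-1}\omega_j\Big)$$ $$=\frac{1}{\prod_{k=1}^{n-1}\sum_{j=1}^k\omega_j}\Big(\beta-\sum_{k=1}^{n-1}\frac{1}{\sum_{j=1}^k\omega_j}\Big)-\sum_{p=1}^{n-1}\frac{(-1)^p\,e^{-\beta\sum_{i=1}^p\omega_i}}{\Big(\prod_{m=2}^p\sum_{i=m}^p\omega_i\Big)\Big(\sum_{r=1}^p\omega_r\Big)^2\Big(\prod_{k=p+1}^{n-1}\sum_{j=p+1}^k\omega_j\Big)},$$ where empty products equal $1$. *)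

From Stdlib Require Import Reals Lra Lia List.
From Coquelicot Require Import Coquelicot.
Open Scope R_scope.

(* sumR m p f = f m + f (m+1) + ... + f p ;  empty (= 0) if p < m. *)
Definition sumR (m p : nat) (f : nat -> R) : R :=
  fold_right Rplus 0 (map f (seq m (S p - m))).

(* prodR m p f = f m * ... * f p ;  empty (= 1) if p < m. *)
Definition prodR (m p : nat) (f : nat -> R) : R :=
  fold_right Rmult 1 (map f (seq m (S p - m))).

(* Nested (ordered) iterated integral.
   nest k F b acc = \int_0^b dx_1 \int_0^{x_1} dx_2 ... \int_0^{x_{k-1}} dx_k
                       F (acc ++ [x_1; ...; x_k]). *)
Fixpoint nest (k : nat) (F : list R -> R) (b : R) (acc : list R) : R :=
  match k with
  | O => F acc
  | S k' => RInt (fun x => nest k' F x (acc ++ x :: nil)) 0 b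
  end.

(* beta_j (1-based) read from the list of integration variables *)
Definition bvar (bs : list R) (j : nat) : R := nth (j - 1) bs 0.

From Stdlib Require Import Reals Lra Lia List.
From Coquelicot Require Import Coquelicot.
Open Scope R_scope.

(* Put u_0 = 0, u_j = ω_1 + ... + ω_j for 0 < j < n and u_n = 0.  The
   exponent of the integrand is then Σ_{j=1}^n (u_{j-1} - u_j) β_j, and
   integrating the variables one at a time turns the ordered integral into the
   recursively defined [exp_nest u n β] (lemma [nest_exp_nest]).

   For pairwise distinct nodes λ_0, ..., λ_k the iterated integral [exp_nest]
   has the divided-difference closed form Σ_m e^{(λ_0-λ_m) x} / Π_{l≠m} (λ_l - λ_m)
   ([exp_nest_distinct]); the induction step integrates exponentials and
   recombines the constants with the Lagrange partial fraction identity
   [partial_fractions].  Our nodes are not distinct, u_0 = u_n, but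
   u_1, ..., u_n are (this is the hypothesis on the window sums), so one more
   integration of the distinct closed form gives a confluent closed form with a
   term linear in β; its constants recombine with the squared partial fraction
   identity [partial_fractions_sq] ([exp_nest_confluent]).  The theorem follows
   by writing the node differences u_b - u_a as window sums Σ_{i=a+1}^b ω_i. *)

Section RangeFold.

Variable op : R -> R -> R.
Variable e : R.
Hypothesis op_assoc : forall x y z, op x (op y z) = op (op x y) z.
Hypothesis op_unit_l : forall x, op e x = x.
Hypothesis op_unit_r : forall x, op x e = x.

Lemma fold_right_op_unit (l : list R) (z : R) :
  fold_right op z l = op (fold_right op e l) z.
Proof.
  induction l as [|x l IH]; simpl.
  - now rewrite op_unit_l.
  - now rewrite IH, op_assoc.
Qed.

Lemma range_fold_split (f : nat -> R) (a b c : nat) :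
  (a <= S b)%nat -> (b <= c)%nat ->
  fold_right op e (map f (seq a (S c - a))) =
  op (fold_right op e (map f (seq a (S b - a))))
     (fold_right op e (map f (seq (S b) (S c - S b)))).
Proof.
  intros Hab Hbc.
  replace (S c - a)%nat with ((S b - a) + (S c - S b))%nat by lia.
  rewrite seq_app, map_app, fold_right_app.
  replace (a + (S b - a))%nat with (S b) by lia.
  apply fold_right_op_unit.
Qed.

Lemma range_fold_one (f : nat -> R) (a : nat) :
  fold_right op e (map f (seq a (S a - a))) = f a.
Proof. rewrite Nat.sub_succ_l, Nat.sub_diag by lia. apply op_unit_r. Qed.

Lemma range_fold_empty (f : nat -> R) (a b : nat) :
  (b < a)%nat -> fold_right op e (map f (seq a (S b - a))) = e.
Proof. intros Hba. now replace (S b - a)%nat with 0%nat by lia. Qed.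

Lemma range_fold_ext (f g : nat -> R) (a b : nat) :
  (forall j, (a <= j <= b)%nat -> f j = g j) ->
  fold_right op e (map f (seq a (S b - a))) = fold_right op e (map g (seq a (S b - a))).
Proof.
  intros Hfg. f_equal. apply map_ext_in.
  intros j Hj. apply in_seq in Hj. apply Hfg. lia.
Qed.

Lemma range_fold_succ (f : nat -> R) (a b : nat) :
  fold_right op e (map f (seq (S a) (S (S b) - S a))) =
  fold_right op e (map (fun j => f (S j)) (seq a (S b - a))).
Proof. cbn [Nat.sub]. rewrite <- seq_shift, map_map. reflexivity. Qed.

End RangeFold.

Lemma sumR_split f a b c :
  (a <= S b)%nat -> (b <= c)%nat -> sumR a c f = sumR a b f + sumR (S b) c f.
Proof. intros; apply range_fold_split; auto; intros; ring. Qed.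
Lemma prodR_split f a b c :
  (a <= S b)%nat -> (b <= c)%nat -> prodR a c f = prodR a b f * prodR (S b) c f.
Proof. intros; apply range_fold_split; auto; intros; ring. Qed.
Lemma sumR_one f a : sumR a a f = f a.
Proof. apply range_fold_one; intros; ring. Qed.
Lemma prodR_one f a : prodR a a f = f a.
Proof. apply range_fold_one; intros; ring. Qed.
Lemma sumR_empty f a b : (b < a)%nat -> sumR a b f = 0.
Proof. apply range_fold_empty. Qed.
Lemma prodR_empty f a b : (b < a)%nat -> prodR a b f = 1.
Proof. apply range_fold_empty. Qed.
Lemma sumR_ext f g a b :
  (forall j, (a <= j <= b)%nat -> f j = g j) -> sumR a b f = sumR a b g.
Proof. apply range_fold_ext. Qed.
Lemma prodR_ext f g a b :
  (forall j, (a <= j <= b)%nat -> f j = g j) -> prodR a b f = prodR a b g.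
Proof. apply range_fold_ext. Qed.
Lemma sumR_succ f a b : sumR (S a) (S b) f = sumR a b (fun j => f (S j)).
Proof. apply range_fold_succ. Qed.
Lemma prodR_succ f a b : prodR (S a) (S b) f = prodR a b (fun j => f (S j)).
Proof. apply range_fold_succ. Qed.

Lemma sumR_first0 f k : sumR 0 (S k) f = f 0%nat + sumR 0 k (fun j => f (S j)).
Proof. rewrite (sumR_split f 0 0 (S k)), sumR_one, sumR_succ by lia. reflexivity. Qed.
Lemma prodR_first0 f k : prodR 0 (S k) f = f 0%nat * prodR 0 k (fun j => f (S j)).
Proof. rewrite (prodR_split f 0 0 (S k)), prodR_one, prodR_succ by lia. reflexivity. Qed.

Lemma sumR_last f a b : (a <= S b)%nat -> sumR a (S b) f = sumR a b f + f (S b).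
Proof. intros; rewrite (sumR_split f a b (S b)), sumR_one; auto. Qed.
Lemma prodR_last f a b : (a <= S b)%nat -> prodR a (S b) f = prodR a b f * f (S b).
Proof. intros; rewrite (prodR_split f a b (S b)), prodR_one; auto. Qed.

Lemma sumR_plus f g a b : sumR a b (fun j => f j + g j) = sumR a b f + sumR a b g.
Proof. unfold sumR. induction (seq a (S b - a)); simpl; [ring | rewrite IHl; ring]. Qed.
Lemma sumR_scal c f a b : sumR a b (fun j => c * f j) = c * sumR a b f.
Proof. unfold sumR. induction (seq a (S b - a)); simpl; [ring | rewrite IHl; ring]. Qed.

Lemma prodR_opp f a b : prodR a b (fun j => - f j) = (-1) ^ (S b - a) * prodR a b f.
Proof.
  assert (Hlist : forall l, fold_right Rmult 1 (map (fun j => - f j) l)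
                           = (-1) ^ length l * fold_right Rmult 1 (map f l)).
  { induction l as [|j l IH]; simpl; [ring | rewrite IH; ring]. }
  unfold prodR. now rewrite Hlist, length_seq.
Qed.

Lemma prodR_nz f a b : (forall j, (a <= j <= b)%nat -> f j <> 0) -> prodR a b f <> 0.
Proof.
  unfold prodR. intros Hf.
  assert (Hin : forall j, In j (seq a (S b - a)) -> f j <> 0)
    by (intros j Hj; apply in_seq in Hj; apply Hf; lia).
  induction (seq a (S b - a)) as [|j l IH]; simpl; [lra|].
  apply Rmult_integral_contrapositive; split.
  - apply Hin; now left.
  - apply IH; intros; apply Hin; now right.
Qed.

Definition distinct_nodes (lam : nat -> R) (k : nat) : Prop :=
  forall a b, (a <= k)%nat -> (b <= k)%nat -> a <> b -> lam a <> lam b.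

Definition lagrange_den (lam : nat -> R) (k m : nat) : R :=
  prodR 0 k (fun l => if Nat.eq_dec l m then 1 else lam l - lam m).

Lemma distinct_nodes_tail lam k :
  distinct_nodes lam (S k) -> distinct_nodes (fun l => lam (S l)) k.
Proof. intros Hd a b Ha Hb Hab. apply Hd; lia. Qed.

Lemma distinct_nodes_init lam k : distinct_nodes lam (S k) -> distinct_nodes lam k.
Proof. intros Hd a b Ha Hb Hab. apply Hd; lia. Qed.

Lemma lagrange_den_nz lam k m :
  distinct_nodes lam k -> (m <= k)%nat -> lagrange_den lam k m <> 0.
Proof.
  intros Hd Hm. apply prodR_nz. intros l Hl.
  destruct (Nat.eq_dec l m) as [|Hlm]; [lra|].
  intro E. apply (Hd l m); lia || lra.
Qed.

Lemma lagrange_den_single lam : lagrange_den lam 0 0 = 1.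
Proof. unfold lagrange_den. rewrite prodR_one. reflexivity. Qed.

Lemma lagrange_den_first lam k :
  lagrange_den lam (S k) 0 = prodR 0 k (fun l => lam (S l) - lam 0%nat).
Proof. unfold lagrange_den. now rewrite prodR_first0, Rmult_1_l. Qed.

Lemma lagrange_den_first_succ lam k m :
  lagrange_den lam (S k) (S m)
  = (lam 0%nat - lam (S m)) * lagrange_den (fun l => lam (S l)) k m.
Proof.
  unfold lagrange_den. rewrite prodR_first0. f_equal.
  apply prodR_ext. intros l _.
  destruct (Nat.eq_dec (S l) (S m)), (Nat.eq_dec l m); reflexivity || lia.
Qed.

Lemma lagrange_den_last lam N m :
  (m <= N)%nat -> lagrange_den lam (S N) m = lagrange_den lam N m * (lam (S N) - lam m).
Proof.
  intros Hm. unfold lagrange_den. rewrite prodR_last by lia.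
  destruct (Nat.eq_dec (S N) m); [lia | reflexivity].
Qed.

Lemma lagrange_den_last_node lam N :
  lagrange_den lam (S N) (S N) = prodR 0 N (fun l => lam l - lam (S N)).
Proof.
  unfold lagrange_den. rewrite prodR_last by lia.
  destruct (Nat.eq_dec (S N) (S N)); [|lia]. rewrite Rmult_1_r.
  apply prodR_ext. intros l Hl. destruct (Nat.eq_dec l (S N)); [lia | reflexivity].
Qed.

Lemma partial_fractions N : forall lam z,
  distinct_nodes lam N -> (forall l, (l <= N)%nat -> lam l <> z) ->
  sumR 0 N (fun m => / ((lam m - z) * lagrange_den lam N m))
  = / prodR 0 N (fun l => lam l - z).
Proof.
  induction N as [|N IH]; intros lam z Hd Hz.
  - rewrite sumR_one, prodR_one, lagrange_den_single.
    specialize (Hz 0%nat (le_n 0)). field. lra.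
  - set (mu := fun l => lam (S l)).
    assert (Hmu : distinct_nodes mu N) by now apply distinct_nodes_tail.
    assert (Hz0 : lam 0%nat <> z) by (apply Hz; lia).
    assert (Hmu0 : forall l, (l <= N)%nat -> mu l <> lam 0%nat)
      by (intros l Hl E; apply (Hd (S l) 0%nat); lia || exact E).
    assert (Hmuz : forall l, (l <= N)%nat -> mu l <> z) by (intros; apply Hz; lia).
    rewrite sumR_first0, prodR_first0, lagrange_den_first.
    (* 1/((a-z)(λ0-a)) = 1/(λ0-z) * (1/(a-z) - 1/(a-λ0)) *)
    rewrite (sumR_ext _ (fun m => / (lam 0%nat - z) *
        (/ ((mu m - z) * lagrange_den mu N m)
         + (-1) * / ((mu m - lam 0%nat) * lagrange_den mu N m)))).
    2:{ intros m Hm. rewrite lagrange_den_first_succ. fold mu.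
        assert (lagrange_den mu N m <> 0) by (apply lagrange_den_nz; auto; lia).
        specialize (Hmu0 m ltac:(lia)). specialize (Hmuz m ltac:(lia)).
        unfold mu in *. field. repeat split; auto; lra. }
    rewrite sumR_scal, sumR_plus, sumR_scal, !IH by auto. fold mu.
    assert (prodR 0 N (fun l => mu l - z) <> 0)
      by (apply prodR_nz; intros l Hl; specialize (Hmuz l ltac:(lia)); lra).
    assert (prodR 0 N (fun l => mu l - lam 0%nat) <> 0)
      by (apply prodR_nz; intros l Hl; specialize (Hmu0 l ltac:(lia)); lra).
    unfold mu in *. field. repeat split; auto; lra.
Qed.

(* The confluent companion: squared linear factors yield the logarithmic
   derivative [Σ_l 1/(λ l - z)] of the node polynomial. *)
Lemma partial_fractions_sq N : forall lam z,
  distinct_nodes lam N -> (forall l, (l <= N)%nat -> lam l <> z) ->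
  sumR 0 N (fun m => / ((lam m - z) ^ 2 * lagrange_den lam N m))
  = sumR 0 N (fun l => / (lam l - z)) * / prodR 0 N (fun l => lam l - z).
Proof.
  induction N as [|N IH]; intros lam z Hd Hz.
  - rewrite !sumR_one, prodR_one, lagrange_den_single.
    specialize (Hz 0%nat (le_n 0)). field. lra.
  - set (mu := fun l => lam (S l)).
    assert (Hmu : distinct_nodes mu N) by now apply distinct_nodes_tail.
    assert (Hz0 : lam 0%nat <> z) by (apply Hz; lia).
    assert (Hmu0 : forall l, (l <= N)%nat -> mu l <> lam 0%nat)
      by (intros l Hl E; apply (Hd (S l) 0%nat); lia || exact E).
    assert (Hmuz : forall l, (l <= N)%nat -> mu l <> z) by (intros; apply Hz; lia).
    rewrite !sumR_first0, prodR_first0, lagrange_den_first.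
    rewrite (sumR_ext _ (fun m => / (lam 0%nat - z) *
        (/ ((mu m - z) ^ 2 * lagrange_den mu N m)
         + / (lam 0%nat - z) *
             (/ ((mu m - z) * lagrange_den mu N m)
              + (-1) * / ((mu m - lam 0%nat) * lagrange_den mu N m))))).
    2:{ intros m Hm. rewrite lagrange_den_first_succ. fold mu.
        assert (lagrange_den mu N m <> 0) by (apply lagrange_den_nz; auto; lia).
        specialize (Hmu0 m ltac:(lia)). specialize (Hmuz m ltac:(lia)).
        unfold mu in *. field. repeat split; auto; lra. }
    rewrite sumR_scal, sumR_plus, sumR_scal, sumR_plus, sumR_scal.
    rewrite IH, !partial_fractions by auto. fold mu.
    assert (prodR 0 N (fun l => mu l - z) <> 0)
      by (apply prodR_nz; intros l Hl; specialize (Hmuz l ltac:(lia)); lra).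
    assert (prodR 0 N (fun l => mu l - lam 0%nat) <> 0)
      by (apply prodR_nz; intros l Hl; specialize (Hmu0 l ltac:(lia)); lra).
    unfold mu in *. field. repeat split; auto; lra.
Qed.

(* [exp_nest λ k x] is the k-fold ordered integral
     ∫_0^x dt_1 e^{(λ0-λ1) t_1} ∫_0^{t_1} dt_2 e^{(λ1-λ2) t_2} ... ∫_0^{t_{k-1}} dt_k e^{(λ(k-1)-λk) t_k},
   defined by peeling off the outermost integral. *)
Fixpoint exp_nest (lam : nat -> R) (k : nat) (x : R) : R :=
  match k with
  | O => 1
  | S k' => RInt (fun t => exp ((lam 0%nat - lam 1%nat) * t)
                           * exp_nest (fun l => lam (S l)) k' t) 0 x
  end.

Lemma exp_nest_S lam k x :
  exp_nest lam (S k) x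
  = RInt (fun t => exp ((lam 0%nat - lam 1%nat) * t) * exp_nest (fun l => lam (S l)) k t) 0 x.
Proof. reflexivity. Qed.

Lemma exp_nest_ext k : forall lam mu x,
  (forall l, (l <= k)%nat -> lam l = mu l) -> exp_nest lam k x = exp_nest mu k x.
Proof.
  induction k as [|k IH]; intros lam mu x Heq; [reflexivity|]. cbn [exp_nest].
  rewrite (Heq 0%nat), (Heq 1%nat) by lia.
  apply RInt_ext. intros t _. f_equal. apply IH. intros l Hl. apply Heq. lia.
Qed.

Lemma continuous_exp_mul (c : R) (g : R -> R) (x : R) :
  continuous g x -> continuous (fun t => exp (c * t) * g t) x.
Proof.
  intros Hg. apply (continuous_mult (fun t => exp (c * t)) g); [|exact Hg].
  apply (continuous_comp (fun t => c * t) exp); [|apply continuous_exp].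
  apply (continuous_mult (fun _ => c) (fun t => t));
    [apply continuous_const | apply continuous_id].
Qed.

Lemma exp_nest_continuous k : forall lam x, continuous (exp_nest lam k) x.
Proof.
  induction k as [|k IH]; intros lam x; [apply continuous_const|].
  set (g := fun t => exp ((lam 0%nat - lam 1%nat) * t) * exp_nest (fun l => lam (S l)) k t).
  apply (continuous_RInt_1 g 0 x (exp_nest lam (S k))).
  apply filter_forall. intros y. change (is_RInt g 0 y (RInt g 0 y)).
  apply (RInt_correct g), ex_RInt_continuous.
  intros z _. apply continuous_exp_mul, IH.
Qed.

Lemma ex_RInt_exp_nest c lam k a b :
  ex_RInt (fun t => exp (c * t) * exp_nest lam k t) a b.
Proof.
  apply (ex_RInt_continuous (V := R_CompleteNormedModule)).
  intros z _. apply continuous_exp_mul, exp_nest_continuous.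
Qed.

Lemma is_RInt_exp_mul c K x : c <> 0 ->
  is_RInt (fun t => exp (c * t) * K) 0 x ((exp (c * x) - 1) / c * K).
Proof.
  intros Hc.
  replace ((exp (c * x) - 1) / c * K) with
    (minus ((fun t => exp (c * t) / c * K) x) ((fun t => exp (c * t) / c * K) 0)).
  2:{ unfold minus, plus, opp; simpl. rewrite Rmult_0_r, exp_0. field. auto. }
  apply (is_RInt_derive (fun t => exp (c * t) / c * K) (fun t => exp (c * t) * K)).
  - intros t _. auto_derive; [auto | field; auto].
  - intros t _. apply continuous_exp_mul, continuous_const.
Qed.

Lemma is_RInt_sumR N (h : nat -> R -> R) (I : nat -> R) a b :
  (forall m, (m <= N)%nat -> is_RInt (h m) a b (I m)) ->
  is_RInt (fun t => sumR 0 N (fun m => h m t)) a b (sumR 0 N I).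
Proof.
  induction N as [|N IH]; intros Hh.
  - rewrite sumR_one. apply (is_RInt_ext (h 0%nat)); [intros; now rewrite sumR_one|].
    apply Hh; lia.
  - rewrite sumR_last by lia.
    apply (is_RInt_ext (fun t => sumR 0 N (fun m => h m t) + h (S N) t));
      [intros; now rewrite sumR_last by lia|].
    apply (is_RInt_plus (fun t => sumR 0 N (fun m => h m t)) (h (S N)));
      [apply IH; intros; apply Hh | apply Hh]; lia.
Qed.

Lemma is_RInt_exp_sum N (c K : nat -> R) x :
  (forall m, (m <= N)%nat -> c m <> 0) ->
  is_RInt (fun t => sumR 0 N (fun m => exp (c m * t) * K m)) 0 x
          (sumR 0 N (fun m => (exp (c m * x) - 1) / c m * K m)).
Proof. intros Hc. apply is_RInt_sumR. intros m Hm. apply is_RInt_exp_mul, Hc, Hm. Qed.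

(* Closed form for pairwise distinct nodes (the divided difference of
   [λ ↦ e^{-λ x}], up to the factor [e^{λ0 x}]). *)
Theorem exp_nest_distinct k : forall lam x,
  distinct_nodes lam k ->
  exp_nest lam k x = sumR 0 k (fun m => exp ((lam 0%nat - lam m) * x) / lagrange_den lam k m).
Proof.
  induction k as [|k IH]; intros lam x Hd.
  - cbn [exp_nest]. rewrite sumR_one, lagrange_den_single, Rminus_diag, Rmult_0_l, exp_0.
    field.
  - rewrite exp_nest_S. set (mu := fun l => lam (S l)).
    assert (Hmu : distinct_nodes mu k) by now apply distinct_nodes_tail.
    assert (Hc : forall m, (m <= k)%nat -> lam 0%nat - lam (S m) <> 0)
      by (intros m Hm E; apply (Hd 0%nat (S m)); lia || lra).
    rewrite (RInt_ext _ (fun t => sumR 0 k (fun m =>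
               exp ((lam 0%nat - lam (S m)) * t) * / lagrange_den mu k m))).
    2:{ intros t _. rewrite IH, <- sumR_scal by exact Hmu. apply sumR_ext. intros m _.
        unfold Rdiv. rewrite <- Rmult_assoc, <- exp_plus. unfold mu. do 2 f_equal. ring. }
    rewrite (is_RInt_unique _ _ _ _ (is_RInt_exp_sum k _ _ x Hc)).
    rewrite sumR_first0, lagrange_den_first, Rminus_diag, Rmult_0_l, exp_0.
    (* the constant terms recombine by partial fractions at z = λ0 *)
    rewrite (sumR_ext _ (fun m =>
        exp ((lam 0%nat - lam (S m)) * x) / lagrange_den lam (S k) (S m)
        + / ((mu m - lam 0%nat) * lagrange_den mu k m))).
    2:{ intros m Hm. rewrite lagrange_den_first_succ. fold mu.
        assert (lagrange_den mu k m <> 0) by (apply lagrange_den_nz; auto; lia).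
        specialize (Hc m ltac:(lia)). unfold mu in *. field. lra. }
    rewrite sumR_plus, partial_fractions
      by (auto; intros l Hl; specialize (Hc l Hl); unfold mu; lra).
    unfold mu, Rdiv. rewrite Rmult_1_l. apply Rplus_comm.
Qed.

(* The integrand of the outermost integral in the confluent case: the inner
   integral has the distinct closed form, and its term for the node [λ (N+2)]
   cancels the outer exponential because [λ (N+2) = λ 0]. *)
Lemma confluent_integrand N lam t :
  distinct_nodes (fun l => lam (S l)) (S N) -> lam (S (S N)) = lam 0%nat ->
  exp ((lam 0%nat - lam 1%nat) * t) * exp_nest (fun l => lam (S l)) (S N) t
  = sumR 0 N (fun m => exp ((lam 0%nat - lam (S m)) * t)
        * / ((lam 0%nat - lam (S m)) * lagrange_den (fun l => lam (S l)) N m))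
    + / prodR 0 N (fun l => lam (S l) - lam 0%nat).
Proof.
  intros Hd Hcyc. rewrite (exp_nest_distinct (S N) _ t Hd), sumR_last by lia.
  rewrite Rmult_plus_distr_l, <- sumR_scal. f_equal.
  - apply sumR_ext. intros m Hm. rewrite lagrange_den_last by lia.
    unfold Rdiv. rewrite Hcyc, <- Rmult_assoc, <- exp_plus.
    f_equal; f_equal; ring.
  - rewrite lagrange_den_last_node. unfold Rdiv. rewrite Hcyc.
    rewrite <- Rmult_assoc, <- exp_plus.
    replace ((lam 0%nat - lam 1%nat) * t + (lam 1%nat - lam 0%nat) * t) with 0 by ring.
    now rewrite exp_0, Rmult_1_l.
Qed.

(* Confluent closed form: the nodes [λ 1, ..., λ (N+2)] are distinct but the
   last one coincides with the first, [λ (N+2) = λ 0].  The double node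
   produces the secular term linear in [x]. *)
Theorem exp_nest_confluent N lam x :
  distinct_nodes (fun l => lam (S l)) (S N) -> lam (S (S N)) = lam 0%nat ->
  exp_nest lam (S (S N)) x
  = (x - sumR 0 N (fun l => / (lam (S l) - lam 0%nat)))
      / prodR 0 N (fun l => lam (S l) - lam 0%nat)
    + sumR 0 N (fun m => exp ((lam 0%nat - lam (S m)) * x)
        / ((lam (S m) - lam 0%nat) ^ 2 * lagrange_den (fun l => lam (S l)) N m)).
Proof.
  intros Hd Hcyc. rewrite exp_nest_S, (RInt_ext _ _ _ _ (fun t _ => confluent_integrand N lam t Hd Hcyc)).
  set (mu := fun l => lam (S l)). set (P := prodR 0 N (fun l => mu l - lam 0%nat)).
  assert (Hmu0 : forall l, (l <= N)%nat -> mu l <> lam 0%nat)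
    by (intros l Hl E; apply (Hd l (S N)); [lia | lia | lia | unfold mu in *; lra]).
  assert (Hc : forall m, (m <= N)%nat -> lam 0%nat - lam (S m) <> 0)
    by (intros m Hm; specialize (Hmu0 m Hm); unfold mu in Hmu0; lra).
  rewrite (is_RInt_unique _ 0 x
    (sumR 0 N (fun m => (exp ((lam 0%nat - lam (S m)) * x) - 1) / (lam 0%nat - lam (S m))
                        * / ((lam 0%nat - lam (S m)) * lagrange_den mu N m))
     + (x - 0) * / P)).
  2:{ apply (is_RInt_plus (V := R_NormedModule)).
      - apply (is_RInt_exp_sum N (fun m => lam 0%nat - lam (S m))), Hc.
      - exact (is_RInt_const (V := R_NormedModule) 0 x (/ P)). }
  (* the constant terms recombine by the squared partial fractions at z = λ0 *)
  rewrite (sumR_ext _ (fun m =>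
      exp ((lam 0%nat - lam (S m)) * x)
        / ((lam (S m) - lam 0%nat) ^ 2 * lagrange_den mu N m)
      + (-1) * / ((mu m - lam 0%nat) ^ 2 * lagrange_den mu N m))).
  2:{ intros m Hm. specialize (Hc m ltac:(lia)).
      assert (lagrange_den mu N m <> 0)
        by (apply lagrange_den_nz; [apply distinct_nodes_init, Hd | lia]).
      unfold mu in *. field. repeat split; auto; lra. }
  rewrite sumR_plus, sumR_scal, partial_fractions_sq
    by (auto; apply distinct_nodes_init, Hd).
  assert (HP : P <> 0)
    by (apply prodR_nz; intros l Hl; specialize (Hmu0 l ltac:(lia)); lra).
  unfold P, mu in *. field. exact HP.
Qed.

Definition lin_exponent (u : nat -> R) (bs : list R) : R :=
  sumR 1 (length bs) (fun j => (u (j - 1)%nat - u j) * bvar bs j).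

Lemma lin_exponent_snoc u acc x :
  lin_exponent u (acc ++ x :: nil)
  = lin_exponent u acc + (u (length acc) - u (S (length acc))) * x.
Proof.
  unfold lin_exponent. rewrite length_app, Nat.add_1_r, sumR_last by lia. f_equal.
  - apply sumR_ext. intros j Hj. unfold bvar. now rewrite app_nth1 by lia.
  - unfold bvar. rewrite Nat.sub_succ, Nat.sub_0_r, app_nth2, Nat.sub_diag by lia.
    reflexivity.
Qed.

Lemma nest_exp_nest (u : nat -> R) (F : list R -> R) (n : nat) :
  (forall bs, length bs = n -> F bs = exp (lin_exponent u bs)) ->
  forall k acc b, (length acc + k = n)%nat ->
  nest k F b acc = exp (lin_exponent u acc) * exp_nest (fun l => u (length acc + l)%nat) k b.
Proof.
  intros HF k. induction k as [|k IH]; intros acc b Hlen.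
  - cbn [nest exp_nest]. rewrite HF by lia. ring.
  - cbn [nest]. rewrite exp_nest_S.
    rewrite (RInt_ext _ (fun x => exp (lin_exponent u acc)
        * (exp ((u (length acc) - u (S (length acc))) * x)
           * exp_nest (fun l => u (length acc + S l)%nat) k x))).
    2:{ intros x _. rewrite IH by (rewrite length_app; simpl; lia).
        rewrite lin_exponent_snoc, exp_plus.
        rewrite (exp_nest_ext k _ (fun l => u (length acc + S l)%nat))
          by (intros l _; rewrite length_app; f_equal; simpl; lia).
        apply Rmult_assoc. }
    rewrite Nat.add_0_r, Nat.add_1_r.
    apply (RInt_scal (V := R_CompleteNormedModule)), ex_RInt_exp_nest.
Qed.

Definition psum_nodes (n : nat) (w : nat -> R) (j : nat) : R :=
  if Nat.eq_dec j n then 0 else sumR 1 j w.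

Lemma psum_nodes_sum n w j : j <> n -> psum_nodes n w j = sumR 1 j w.
Proof. intros Hj. unfold psum_nodes. now destruct (Nat.eq_dec j n). Qed.

Lemma psum_nodes_first n w : psum_nodes n w 0 = 0.
Proof. unfold psum_nodes. destruct (Nat.eq_dec 0 n); [reflexivity | apply sumR_empty; lia]. Qed.

Lemma psum_nodes_last n w : psum_nodes n w n = 0.
Proof. unfold psum_nodes. now destruct (Nat.eq_dec n n). Qed.

Lemma sumR_window (w : nat -> R) a b :
  (a <= b)%nat -> sumR 1 b w - sumR 1 a w = sumR (S a) b w.
Proof. intros Hab. rewrite (sumR_split w 1 a b) by lia. ring. Qed.

(* The integrand of the theorem is [exp] of the linear exponent with
   increments [u (j-1) - u j = -ω_j] (j < n) and [u (n-1) - u n = Σ ω]. *)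
Lemma integrand_lin_exponent n w : (1 <= n)%nat ->
  forall bs, length bs = n ->
  exp (- sumR 1 (n - 1) (fun j => bvar bs j * w j) + bvar bs n * sumR 1 (n - 1) w)
  = exp (lin_exponent (psum_nodes n w) bs).
Proof.
  intros Hn bs Hbs. f_equal. unfold lin_exponent. rewrite Hbs.
  destruct n as [|n]; [lia|]. replace (S n - 1)%nat with n by lia.
  rewrite sumR_last, psum_nodes_last, psum_nodes_sum by lia.
  rewrite (sumR_ext (fun j => (psum_nodes (S n) w (j - 1) - psum_nodes (S n) w j) * bvar bs j)
                    (fun j => (-1) * (bvar bs j * w j))).
  { rewrite sumR_scal, Nat.sub_succ, Nat.sub_0_r. ring. }
  intros j Hj. destruct j as [|j]; [lia|].
  rewrite Nat.sub_succ, Nat.sub_0_r, !psum_nodes_sum, sumR_last by lia. ring.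
Qed.

Lemma psum_nodes_distinct N w :
  (forall m p, (1 <= m)%nat -> (m <= p)%nat -> (p <= S N)%nat -> sumR m p w <> 0) ->
  distinct_nodes (fun l => psum_nodes (S (S N)) w (S l)) (S N).
Proof.
  intros Hw.
  assert (Hlt : forall a b, (a < b <= S N)%nat ->
            psum_nodes (S (S N)) w (S a) <> psum_nodes (S (S N)) w (S b)).
  { intros a b Hab. rewrite psum_nodes_sum by lia.
    destruct (Nat.eq_dec b (S N)) as [->|Hb].
    - rewrite psum_nodes_last. apply Hw; lia.
    - rewrite psum_nodes_sum by lia. intro E.
      apply (Hw (S (S a)) (S b)); [lia | lia | lia |].
      rewrite <- sumR_window by lia. lra. }
  intros a b Ha Hb Hab. destruct (Nat.lt_ge_cases a b).
  - apply Hlt; lia.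
  - intro E. apply (Hlt b a); [lia | auto].
Qed.

Lemma psum_nodes_den N w m : (m <= N)%nat ->
  lagrange_den (fun l => psum_nodes (S (S N)) w (S l)) N m
  = (-1) ^ m * prodR 2 (S m) (fun r => sumR r (S m) w)
    * prodR (S m + 1) (S N) (fun k => sumR (S m + 1) k w).
Proof.
  intros Hm. unfold lagrange_den. rewrite (prodR_split _ 0 m N) by lia. f_equal.
  - destruct m as [|m].
    + rewrite prodR_one, prodR_empty by lia.
      destruct (Nat.eq_dec 0 0); [ring | lia].
    + rewrite prodR_last, !prodR_succ by lia.
      destruct (Nat.eq_dec (S m) (S m)); [|lia].
      rewrite Rmult_1_r, (prodR_ext _ (fun j => - sumR (S (S j)) (S (S m)) w)).
      { now rewrite prodR_opp, Nat.sub_0_r. }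
      intros j Hj. destruct (Nat.eq_dec j (S m)); [lia|].
      rewrite !psum_nodes_sum, <- (sumR_window w (S j) (S (S m))) by lia. ring.
  - rewrite Nat.add_1_r, prodR_succ. apply prodR_ext. intros j Hj.
    destruct (Nat.eq_dec j m); [lia|].
    rewrite !psum_nodes_sum, (sumR_window w (S m) (S j)) by lia. reflexivity.
Qed.

(* Used to cancel the sign [(-1)^m] of a Lagrange denominator against [(-1)^(m+1)]. *)
Lemma neg_one_pow_cases m : (-1) ^ m = 1 \/ (-1) ^ m = -1.
Proof.
  induction m as [|m [E|E]]; simpl; [now left | right | left]; rewrite ?E; ring.
Qed.

Lemma psum_nodes_offset n w l :
  (S l < n)%nat -> psum_nodes n w (S l) - psum_nodes n w 0 = sumR 1 (S l) w.
Proof. intros Hl. rewrite psum_nodes_first, psum_nodes_sum by lia. ring. Qed.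

Lemma psum_nodes_term N w beta p
  (Hw : forall m q, (1 <= m)%nat -> (m <= q)%nat -> (q <= S N)%nat -> sumR m q w <> 0) :
  (p <= N)%nat ->
  let u := psum_nodes (S (S N)) w in
  exp ((u 0%nat - u (S p)) * beta)
    / ((u (S p) - u 0%nat) ^ 2 * lagrange_den (fun l => u (S l)) N p)
  = (-1) * ((-1) ^ S p * exp (- beta * sumR 1 (S p) w)
            / (prodR 2 (S p) (fun m => sumR m (S p) w) * sumR 1 (S p) w ^ 2
               * prodR (S p + 1) (S N) (fun k => sumR (S p + 1) k w))).
Proof.
  intros Hp u. unfold u. rewrite psum_nodes_den, psum_nodes_offset by lia.
  rewrite psum_nodes_first, psum_nodes_sum by lia.
  replace ((0 - sumR 1 (S p) w) * beta) with (- beta * sumR 1 (S p) w) by ring.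
  assert (sumR 1 (S p) w <> 0) by (apply Hw; lia).
  assert (prodR 2 (S p) (fun r => sumR r (S p) w) <> 0)
    by (apply prodR_nz; intros; apply Hw; lia).
  assert (prodR (S p + 1) (S N) (fun k => sumR (S p + 1) k w) <> 0)
    by (apply prodR_nz; intros; apply Hw; lia).
  simpl pow. destruct (neg_one_pow_cases p) as [E|E]; rewrite E; field; auto.
Qed.

Theorem mainTheorem4 (n : nat) (beta : R) (w : nat -> R)
  (Hn : (2 <= n)%nat)
  (Hw : forall m p : nat, (1 <= m)%nat -> (m <= p)%nat -> (p <= n - 1)%nat ->
          sumR m p w <> 0) :
  nest n (fun bs => exp (- sumR 1 (n - 1) (fun j => bvar bs j * w j)
                         + bvar bs n * sumR 1 (n - 1) w)) beta nil
  = / prodR 1 (n - 1) (fun k => sumR 1 k w)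
      * (beta - sumR 1 (n - 1) (fun k => / sumR 1 k w))
    - sumR 1 (n - 1) (fun p =>
        (-1) ^ p * exp (- beta * sumR 1 p w)
        / (prodR 2 p (fun m => sumR m p w) * (sumR 1 p w) ^ 2
           * prodR (p + 1) (n - 1) (fun k => sumR (p + 1) k w))).
Proof.
  destruct n as [|[|N]]; [lia | lia |]. set (u := psum_nodes (S (S N)) w).
  rewrite (nest_exp_nest u _ _ (integrand_lin_exponent (S (S N)) w ltac:(lia))
             (S (S N)) nil beta) by reflexivity.
  change (exp_nest (fun l => u (length nil + l)%nat) (S (S N)) beta)
    with (exp_nest u (S (S N)) beta).
  (* no variable is integrated yet, so the prefactor is e^0 *)
  unfold lin_exponent at 1. rewrite sumR_empty, exp_0, Rmult_1_l by (simpl; lia).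
  replace (S (S N) - 1)%nat with (S N) in * by lia.
  rewrite exp_nest_confluent.
  2:{ now apply psum_nodes_distinct. }
  2:{ unfold u. now rewrite psum_nodes_last, psum_nodes_first. }
  rewrite prodR_succ, !sumR_succ.
  rewrite (prodR_ext _ (fun l => sumR 1 (S l) w))
    by (intros; apply psum_nodes_offset; lia).
  rewrite (sumR_ext (fun l => / (u (S l) - u 0%nat)) (fun l => / sumR 1 (S l) w))
    by (intros; unfold u; rewrite psum_nodes_offset by lia; reflexivity).
  rewrite (sumR_ext (fun m => exp ((u 0%nat - u (S m)) * beta)
                      / ((u (S m) - u 0%nat) ^ 2 * lagrange_den (fun l => u (S l)) N m)) _)
    by (intros; apply psum_nodes_term; auto; lia).
  rewrite sumR_scal. field.
  apply prodR_nz. intros; apply Hw; lia.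
Qed.
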